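(* Let $G$ be a reduced torsion-free abelian group which is super directly finite. Then $r_0(G)$ is finite.
   Context: All groups are abelian. A group $G$ is directly finite if there is no decomposition $G=A\oplus C$ with $C\ne0$ and $A\cong G$; $G$ is super directly finite if every epimorphic image of $G$ is directly finite. $r_0(G)$ denotes the torsion-free rank. *)

From mathcomp Require Import all_boot all_order all_algebra.
Set Implicit Arguments. Unset Strict Implicit. Unset Printing Implicit Defensive.
Import GRing.Theory.
Local Open Scope ring_scope.

Definition subgroup (G : zmodType) (A : G -> Prop) : Prop :=
  A 0 /\ (forall x y, A x -> A y -> A (x - y)).

Definition additive_map (G H : zmodType) (f : G -> H) : Prop :=
  forall x y, f (x - y) = f x - f y.

Definition torsion_free (G : zmodType) : Prop :=
  forall (x : G) (n : nat), x *+ n = 0 -> n = 0%N \/ x = 0.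

Definition divisible_subgroup (G : zmodType) (D : G -> Prop) : Prop :=
  subgroup D /\ forall (x : G) (n : nat), D x -> (0 < n)%N ->
    exists y, D y /\ x = y *+ n.

Definition reduced (G : zmodType) : Prop :=
  forall D : G -> Prop, divisible_subgroup D -> forall x, D x -> x = 0.

Definition directly_finite (G : zmodType) : Prop :=
  ~ exists (A C : G -> Prop),
      [/\ subgroup A, subgroup C,
          (forall x, A x -> C x -> x = 0),
          (forall x, exists a c, [/\ A a, C c & x = a + c]) &
          (exists c, C c /\ c <> 0)] /\
          (exists g : G -> G, [/\ additive_map g, injective g &
                                 forall y, A y <-> exists x, y = g x]).

Definition super_directly_finite (G : zmodType) : Prop :=
  forall (H : zmodType) (f : G -> H),
    additive_map f -> (forall y, exists x, f x = y) -> directly_finite H.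

Definition Z_independent (G : zmodType) (k : nat) (v : 'I_k -> G) : Prop :=
  forall c : 'I_k -> int, \sum_(i < k) v i *~ c i = 0 -> forall i, c i = 0.

Definition finite_torsion_free_rank (G : zmodType) : Prop :=
  exists n : nat, forall (k : nat) (v : 'I_k -> G), Z_independent v -> (k <= n)%N.

(* If r_0(G) were infinite, G would contain an infinite independent sequence
   x_0, x_1, ...  A rational vector space is divisible, hence injective, so
   (by Zorn's lemma on partial homomorphisms) any assignment of values to the
   x_i extends to a homomorphism G -> Q[X]; sending the x_i onto an enumeration
   of Q[X] makes it surjective.  But Q[X] = X Q[X] (+) Q with X Q[X] ~ Q[X] is
   not directly finite. *)

From mathcomp Require Import all_boot all_order all_algebra.
From mathcomp Require Import boolp classical_sets.
Set Implicit Arguments. Unset Strict Implicit.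
Import GRing.Theory Num.Theory.
Local Open Scope ring_scope.
Local Open Scope classical_set_scope.

Section Subgroup.
Variables (M : zmodType) (A : M -> Prop).
Hypothesis A_subgroup : subgroup A.

Lemma subgroupN x : A x -> A (- x).
Proof. by case: A_subgroup => A0 AB Ax; rewrite -sub0r; apply: AB. Qed.

Lemma subgroupD x y : A x -> A y -> A (x + y).
Proof. by move=> Ax /subgroupN Ay; rewrite -[y]opprK; apply: A_subgroup.2. Qed.

Lemma subgroupMn x n : A x -> A (x *+ n).
Proof.
move=> Ax; elim: n => [|n IHn]; first by rewrite mulr0n; case: A_subgroup.
by rewrite mulrS; apply: subgroupD.
Qed.

Lemma subgroupMz x z : A x -> A (x *~ z).
Proof.
move=> Ax; case: z => n; first by rewrite -pmulrn; apply: subgroupMn.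
by rewrite NegzE mulrNz -pmulrn; apply/subgroupN/subgroupMn.
Qed.

End Subgroup.

Lemma pairMzE (M1 M2 : zmodType) (p : M1 * M2) (z : int) :
  p *~ z = (p.1 *~ z, p.2 *~ z).
Proof. by case: z => n; rewrite ?NegzE ?mulrNz -?pmulrn pairMnE. Qed.

Lemma sum_mulrz_widen (M : zmodType) (F : nat -> M) (c : nat -> int) k K :
  (k <= K)%N ->
  \sum_(i < k) F i *~ c i = \sum_(i < K) F i *~ (if (i < k)%N then c i else 0).
Proof.
move=> le_kK; rewrite (big_ord_widen K (fun i => F i *~ c i) le_kK) big_mkcond.
by apply: eq_bigr => i _; case: ifP; rewrite ?mulr0z.
Qed.

Lemma sum_mulrz_delta (M : zmodType) (F : nat -> M) n :
  \sum_(i < n.+1) F i *~ (i == n :> nat)%:Z = F n.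
Proof.
rewrite big_ord_recr /= eqxx mulr1z big1 ?add0r // => i _.
by rewrite ltn_eqF ?mulr0z.
Qed.

Section PartialHom.
Variables G D : zmodType.

Definition functional (H : set (G * D)) :=
  forall g a b, H (g, a) -> H (g, b) -> a = b.

Definition partial_hom (H : set (G * D)) := subgroup H /\ functional H.

Lemma functional_of_kernel0 H :
  subgroup H -> (forall a, H (0, a) -> a = 0) -> functional H.
Proof.
move=> H_sub ker0 g a b Ha Hb; apply/eqP; rewrite -subr_eq0; apply/eqP/ker0.
by rewrite -(subrr g); exact: H_sub.2 _ _ Ha Hb.
Qed.

Lemma partial_hom_chain_union (C : set (set (G * D))) :
  (exists K, C K) -> (forall K, C K -> partial_hom K) ->
  (forall K L, C K -> C L -> K `<=` L \/ L `<=` K) ->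
  partial_hom (fun p => exists2 K, C K & K p).
Proof.
move=> [K0 CK0] C_hom C_chain.
have common K L p q : C K -> C L -> K p -> L q ->
    exists2 N, C N & [/\ partial_hom N, N p & N q].
  move=> CK CL Kp Lq; have [KL|LK] := C_chain _ _ CK CL.
    by exists L => //; split; [exact: C_hom | exact: KL |].
  by exists K => //; split; [exact: C_hom | | exact: LK].
split; first split.
- by exists K0 => //; case: (C_hom _ CK0) => -[].
- move=> p q [K CK Kp] [L CL Lq].
  have [N CN [[N_sub _] Np Nq]] := common _ _ _ _ CK CL Kp Lq.
  by exists N => //; exact: N_sub.2.
- move=> g a b [K CK Ka] [L CL Lb].
  have [N _ [[_ N_fun] Na Nb]] := common _ _ _ _ CK CL Ka Lb.
  exact: N_fun Na Nb.
Qed.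

Section DivisibleTarget.
Hypothesis D_divisible : forall (a : D) n, (0 < n)%N -> exists e, e *+ n = a.

Lemma partial_hom_line_generator H g : partial_hom H ->
  exists m : nat, (exists b, H (g *+ m, b)) /\
                  forall k b, H (g *~ k, b) -> (m %| k)%Z.
Proof.
move=> [H_sub H_fun].
pose P n := `[< (0 < n)%N /\ exists b, H (g *+ n, b) >].
have [[n Pn] | noP] := pselect (exists n, P n); last first.
  exists 0%N; split=> [|k b Hk]; first by exists 0; rewrite mulr0n; case: H_sub.
  rewrite dvd0z; apply/eqP; apply: contrapT => /eqP k_neq0; apply: noP.
  exists `|k|%N; apply/asboolP; split; first by rewrite absz_gt0.
  exists (b *~ sgz k); have := subgroupMz H_sub (sgz k) Hk.
  by rewrite pairMzE /= -mulrzA mulrC -abszEsg pmulrn.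
case: (ex_minnP (ex_intro _ n Pn)) => m /asboolP [m_gt0 [b Hm]] m_min.
exists m; split=> [|k b' Hk]; first by exists b.
have m_neq0 : m%:Z != 0 by rewrite eqz_nat -lt0n.
have Hq := subgroupMz H_sub (k %/ m)%Z Hm; rewrite pairMzE /= in Hq.
have : H (g *~ k - g *+ m *~ (k %/ m)%Z, b' - b *~ (k %/ m)%Z).
  exact: H_sub.2 _ _ Hk Hq.
rewrite pmulrn -mulrzA mulrC {1}(divz_eq k m) mulrzDr addrAC subrr add0r.
move=> Hr; apply/dvdz_mod0P.
move: Hr (modz_ge0 k m_neq0) (ltz_pmod k (m_gt0 : 0 < m%:Z)).
case: (k %% m)%Z => [r|//] Hr _; rewrite ltz_nat => r_lt_m.
apply/eqP; rewrite eqz_nat; apply: contraTT r_lt_m; rewrite -ltnNge -lt0n => r_gt0.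
by apply: m_min; apply/asboolP; split=> //; exists (b' - b *~ (k %/ m)%Z); rewrite pmulrn.
Qed.

Lemma partial_hom_line_value H g : partial_hom H ->
  exists e, forall k b, H (g *~ k, b) -> b = e *~ k.
Proof.
move=> H_hom; have [H_sub H_fun] := H_hom.
have [m [[b Hm] m_dvd]] := partial_hom_line_generator g H_hom.
have [e me] : exists e, e *+ m = b.
  case: (posnP m) => [m0 | m_gt0]; last exact: D_divisible.
  by exists 0; rewrite m0 mulr0n in Hm *; apply: H_fun H_sub.1 Hm.
exists e => k b' Hk; have /dvdzP [q k_eq] := m_dvd k b' Hk; subst k.
have := subgroupMz H_sub q Hm; rewrite pairMzE /= pmulrn -mulrzA [(_ * q)%R]mulrC => Hq.
by rewrite (H_fun _ _ _ Hk Hq) -me pmulrn -mulrzA mulrC.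
Qed.

Lemma partial_hom_extend H g : partial_hom H ->
  exists2 H', partial_hom H' & H `<=` H' /\ exists a, H' (g, a).
Proof.
move=> H_hom; have [H_sub _] := H_hom.
have [e line_val] := partial_hom_line_value g H_hom.
pose H' p := exists q k, H q /\ p = q + (g, e) *~ k.
have H'_sub : subgroup H'.
  split; first by exists 0, 0; split; [case: H_sub | rewrite mulr0z addr0].
  move=> _ _ [q [k [Hq ->]]] [q' [k' [Hq' ->]]].
  exists (q - q'), (k - k'); split; first exact: H_sub.2.
  by rewrite mulrzBr opprD addrACA.
exists H'; last split.
- split=> //; apply: functional_of_kernel0 => // a [q [k [Hq E]]].
  have q_eq : q = (g *~ - k, a - e *~ k).
    rewrite -[q](addrK ((g, e) *~ k)) -E pairMzE mulrNz.
    by congr (_, _); rewrite /= sub0r.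
  rewrite q_eq in Hq; move/eqP: (line_val _ _ Hq).
  by rewrite mulrNz subr_eq addrC subrr => /eqP.
- by move=> p Hp; exists p, 0; rewrite mulr0z addr0.
- by exists e, 0, 1; split; [case: H_sub | rewrite mulr1z add0r].
Qed.

Lemma partial_hom_maximal H : partial_hom H ->
  exists2 M, partial_hom M & H `<=` M /\
    forall N, partial_hom N -> M `<=` N -> N `<=` M.
Proof.
move=> H_hom.
pose extends K := partial_hom K /\ H `<=` K.
pose T := {K | extends K}.
pose R (s t : T) := `[< sval s `<=` sval t >].
pose H_ext : T := exist extends H (conj H_hom (@subset_refl _ H)).
have [[M [M_hom HM]] M_max] : exists t : T, premaximal R t.
  apply: (ZL_preorder H_ext).
  - by move=> t; apply/asboolP.
  - by move=> r s t /asboolP rs /asboolP st; apply/asboolP => p /rs /st.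
  move=> A A_chain; pose C K := exists2 t, A t & sval t = K.
  have [[t0 At0] | A0] := pselect (exists t, A t); last first.
    by exists H_ext => s As; case: A0; exists s.
  have U_hom : partial_hom (fun p => exists2 K, C K & K p).
    apply: partial_hom_chain_union.
    - by exists (sval t0), t0.
    - by move=> _ [t _ <-]; case: (svalP t).
    move=> _ _ [s As <-] [t At <-].
    by case: (A_chain _ _ As At) => /asboolP; [left | right].
  have HU : H `<=` (fun p => exists2 K, C K & K p).
    by move=> p Hp; exists (sval t0); [exists t0 | case: (svalP t0) => _; apply].
  exists (exist extends _ (conj U_hom HU)) => s As; apply/asboolP => p sp.
  by exists (sval s) => //; exists s.
exists M => //; split=> // N N_hom MN p Np.
have HN : H `<=` N by move=> q /HM /MN.
exact: (asboolW (M_max (exist extends N (conj N_hom HN)) (asboolT MN))).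
Qed.

Lemma partial_hom_extends H : partial_hom H ->
  exists f : G -> D, additive_map f /\ forall g a, H (g, a) -> f g = a.
Proof.
move=> H_hom; have [M M_hom [HM M_max]] := partial_hom_maximal H_hom.
have [M_sub M_fun] := M_hom.
have M_total g : exists a, M (g, a).
  have [N N_hom [MN [a Na]]] := partial_hom_extend g M_hom.
  by exists a; apply: M_max Na.
have [f Mf] := choice M_total.
exists f; split=> [g h | g a /HM Ma]; last exact: M_fun (Mf g) Ma.
exact: M_fun (Mf (g - h)) (M_sub.2 _ _ (Mf g) (Mf h)).
Qed.

End DivisibleTarget.
End PartialHom.

Definition prefix_independent (G : zmodType) (x : nat -> G) k :=
  Z_independent (fun i : 'I_k => x i).

Section SpanGraph.
Variables (G D : zmodType) (x : nat -> G) (d : nat -> D).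
Hypothesis x_independent : forall k, prefix_independent x k.

Definition span_graph : set (G * D) :=
  fun p => exists k (c : nat -> int), p = \sum_(i < k) (x i, d i) *~ c i.

Lemma span_graph_subgroup : subgroup span_graph.
Proof.
split; first by exists 0%N, (fun=> 0); rewrite big_ord0.
move=> _ _ [k [c ->]] [k' [c' ->]].
pose pad k c i := if (i < k)%N then c i else 0 : int.
exists (maxn k k'), (fun i => pad k c i - pad k' c' i).
pose F i := (x i, d i).
rewrite (sum_mulrz_widen F _ (leq_maxl k k')) (sum_mulrz_widen F _ (leq_maxr k k')).
by rewrite -sumrB; apply: eq_bigr => i _; rewrite mulrzBr.
Qed.

Lemma span_graph_hom : partial_hom span_graph.
Proof.
split; first exact: span_graph_subgroup.
apply: functional_of_kernel0 => [|a [k [c E]]]; first exact: span_graph_subgroup.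
have c0 (j : 'I_k) : c j = 0.
  apply: (@x_independent k (fun i : 'I_k => c i) _ j).
  have := congr1 fst E; rewrite (raddf_sum fst) /=.
  by rewrite (eq_bigr (fun i : 'I_k => x i *~ c i)) => [/esym |i _]; rewrite ?pairMzE.
have := congr1 snd E; rewrite (raddf_sum snd) big1 => [//|i _].
by rewrite pairMzE c0 mulr0z.
Qed.

Lemma span_graph_generator i : span_graph (x i, d i).
Proof.
by exists i.+1, (fun j => (j == i)%:Z); rewrite (sum_mulrz_delta (fun j => (x j, d j))).
Qed.

End SpanGraph.

Lemma independent_sequence_values (G D : zmodType) (x : nat -> G) (d : nat -> D) :
  (forall (a : D) n, (0 < n)%N -> exists e, e *+ n = a) ->
  (forall k, prefix_independent x k) ->
  exists f : G -> D, additive_map f /\ forall i, f (x i) = d i.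
Proof.
move=> D_divisible x_independent.
have [f [f_add f_span]] := partial_hom_extends D_divisible (span_graph_hom d x_independent).
by exists f; split=> // i; apply/f_span/span_graph_generator.
Qed.

Lemma rat_scaled_int k (u : 'I_k -> rat) :
  exists c : 'I_k -> int, exists2 N : rat, N != 0 & forall j, (c j)%:~R = u j * N.
Proof.
exists (fun j => numq (u j) * \prod_(j' | j' != j) denq (u j')).
  exists (\prod_j (denq (u j))%:~R).
  by apply/prodf_neq0 => j _; rewrite intr_eq0 denq_neq0.
move=> j; rewrite intrM rmorph_prod numqE [in RHS](bigD1 j) //= mulrA.
by congr (_ * _); apply: eq_bigr.
Qed.

Lemma int_vectors_dependent k m (A : 'I_k -> 'I_m -> int) : (m < k)%N ->
  exists2 c : 'I_k -> int, exists j, c j != 0 & forall i, \sum_j c j * A j i = 0.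
Proof.
move=> lt_mk; pose M : 'M[rat]_(k, m) := \matrix_(j, i) (A j i)%:~R.
pose u := nz_row (kermx M).
have /matrix0Pn [i0 [j1 uj1]] : u != 0.
  rewrite nz_row_eq0 kermx_eq0 /row_free; apply: contraTneq lt_mk => <-.
  by rewrite -leqNgt rank_leq_col.
have uM : u *m M = 0 by apply/sub_kermxP/nz_row_sub.
have [c [N N_neq0 cE]] := rat_scaled_int (u 0).
exists c; first by exists j1; rewrite -(intr_eq0 rat) cE mulf_neq0 // -(ord1 i0).
move=> i; apply: (@intr_inj rat); rewrite rmorph_sum /= rmorph0.
under eq_bigr => j _ do rewrite intrM cE mulrAC.
rewrite -mulr_suml; apply/eqP; rewrite mulf_eq0; apply/orP; left; apply/eqP.
move/matrixP: uM => /(_ 0 i); rewrite !mxE => uMi.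
by rewrite -[RHS]uMi; apply: eq_bigr => j _; rewrite mxE.
Qed.

Definition snocf (T : Type) (y : nat -> T) m (t : T) i := if (i < m)%N then y i else t.

Section Greedy.
Variables (T : Type) (y0 : nat -> T) (next : (nat -> T) -> nat -> T).

Fixpoint greedy_prefix n : nat -> T :=
  if n is n'.+1 then snocf (greedy_prefix n') n' (next (greedy_prefix n') n') else y0.

Definition greedy_seq i := greedy_prefix i.+1 i.

Lemma greedy_prefixE n i : (i < n)%N -> greedy_prefix n i = greedy_seq i.
Proof.
elim: n => [//|n IHn]; rewrite ltnS leq_eqVlt => /orP [/eqP -> //|lt_in].
by rewrite /= /snocf lt_in IHn.
Qed.

End Greedy.

Section Rank.
Variable G : zmodType.

Definition rational_span (y : nat -> G) m (g : G) :=
  exists (n : int) (a : 'I_m -> int),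
    n != 0 /\ g *~ n = \sum_(i < m) y i *~ a i.

Lemma independent_size_le (y : nat -> G) m k (w : 'I_k -> G) :
  (forall g, rational_span y m g) -> Z_independent w -> (k <= m)%N.
Proof.
move=> y_span w_indep; rewrite leqNgt; apply/negP => lt_mk.
have [N /choice [A wNA]] := choice (fun j => y_span (w j)).
have [c [j1 cj1] cA] := int_vectors_dependent A lt_mk.
have rel : \sum_j w j *~ (N j * c j) = 0.
  under eq_bigr => j _ do rewrite mulrzA (wNA j).2 mulrz_suml.
  rewrite exchange_big /= big1 // => i _.
  under eq_bigr => j _ do rewrite -mulrzA mulrC.
  by rewrite -mulrz_sumr cA mulr0z.
by move: (w_indep _ rel j1) => /eqP; rewrite mulf_eq0 (negbTE (wNA j1).1) (negbTE cj1).
Qed.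

Lemma rational_span_of_dependent_snoc (y : nat -> G) m g :
  prefix_independent y m -> ~ prefix_independent (snocf y m g) m.+1 ->
  rational_span y m g.
Proof.
move=> y_indep /existsNP [c /not_implyP [+ /existsNP [i0 ci0]]].
rewrite big_ord_recr /= /snocf ltnn.
under eq_bigr => i _ do rewrite (ltn_ord i).
have [cm0 | cm_neq0] := eqVneq (c ord_max) 0.
  rewrite cm0 mulr0z addr0 => /y_indep c0; case: ci0.
  case: (unliftP ord_max i0) => [j ->|->] //; rewrite -(c0 j).
  by apply: f_equal; apply: val_inj; rewrite /= /bump leqNgt ltn_ord.
move=> rel; exists (c ord_max), (fun i => - c (widen_ord (leqnSn m) i)); split=> //.
under eq_bigr => i _ do rewrite mulrNz.
by rewrite sumrN; apply/eqP; rewrite -addr_eq0 addrC rel.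
Qed.

Lemma independent_snoc_exists (y : nat -> G) m :
  ~ finite_torsion_free_rank G -> prefix_independent y m ->
  exists g, prefix_independent (snocf y m g) m.+1.
Proof.
move=> infinite_rank y_indep; apply: contrapT => /forallNP no_snoc.
apply: infinite_rank; exists m => k w; apply: independent_size_le => g.
exact: rational_span_of_dependent_snoc (no_snoc g).
Qed.

Lemma infinite_independent_sequence : ~ finite_torsion_free_rank G ->
  exists x : nat -> G, forall k, prefix_independent x k.
Proof.
move=> infinite_rank.
have next_ex (p : (nat -> G) * nat) : exists g,
    prefix_independent p.1 p.2 -> prefix_independent (snocf p.1 p.2 g) p.2.+1.
  case: p => y m /=; have [/(independent_snoc_exists infinite_rank) [g]|] :=
    pselect (prefix_independent y m); last by exists 0.
  by exists g.
have [next next_indep] := choice next_ex.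
exists (greedy_seq (fun=> 0) (fun y m => next (y, m))) => k.
rewrite /prefix_independent (funext (fun i : 'I_k => esym (greedy_prefixE _ _ (ltn_ord i)))).
elim: k => [c _ [] //|k IHk]; exact: (next_indep (_, k)).
Qed.

End Rank.

Lemma lmod_divisible (F : numFieldType) (V : lmodType F) (a : V) n :
  (0 < n)%N -> exists e, e *+ n = a.
Proof.
move=> n_gt0; exists (n%:R^-1 *: a).
by rewrite -scaler_nat scalerA mulfV ?scale1r // pnatr_eq0 -lt0n.
Qed.

Lemma poly_not_directly_finite (R : nzRingType) : ~ directly_finite {poly R}.
Proof.
apply; exists (fun p : {poly R} => p`_0 = 0), (fun p : {poly R} => exists c, p = c%:P).
split; first split.
- by split=> [|p q p0 q0]; rewrite ?coef0 // coefB p0 q0 subr0.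
- by split=> [|_ _ [a ->] [b ->]]; [exists 0; rewrite polyC0 | exists (a - b); rewrite polyCB].
- by move=> p p0 [c pc]; move: p0; rewrite pc coefC /= => ->.
- move=> p; exists (p - (p`_0)%:P), (p`_0)%:P; split; last by rewrite subrK.
  + by rewrite coefB coefC /= subrr.
  + by exists p`_0.
- by exists 1; split; [exists 1 | apply/eqP; rewrite oner_eq0].
exists (fun p => p * 'X); split.
- by move=> p q; rewrite mulrBl.
- by move=> p q /polyP pq; apply/polyP => i; have := pq i.+1; rewrite !coefMX.
- move=> q; split=> [q0 | [p ->]]; last by rewrite coefMX.
  have /factor_theorem [p ->] : root q 0 by rewrite /root horner_coef0 q0.
  by exists p; rewrite subr0.
Qed.

Theorem proposition5p3 (G : zmodType) :
  reduced G -> torsion_free G -> super_directly_finite G ->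
  finite_torsion_free_rank G.
Proof.
move=> _ _ G_sdf; apply: contrapT => /infinite_independent_sequence [x x_indep].
pose enum_poly i : {poly rat} := odflt 0 (unpickle i).
have [f [f_add f_x]] := independent_sequence_values enum_poly (@lmod_divisible _ _) x_indep.
apply: (@poly_not_directly_finite rat); apply: (G_sdf _ f f_add) => p.
by exists (x (pickle p)); rewrite f_x /enum_poly pickleK.
Qed.
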